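(* For every privacy definition $\mathrm{Priv}$, the set $\mathrm{rowcone}(\mathrm{Priv})$ is a convex cone.
   Context: An algorithm $\mathcal{M}$ has a countable input domain $\mathbb{I}=\{D_1,D_2,\dots\}$ and a countable range; it is identified with its output probabilities $P(\mathcal{M}(D)=\omega)$. A privacy definition is a set of algorithms with the same input domain $\mathbb{I}$. For algorithms $\mathcal{M}$ and $\mathcal{A}$ with $\mathrm{range}(\mathcal{M})\subseteq\mathrm{domain}(\mathcal{A})$ and independent randomness, $\mathcal{A}\circ\mathcal{M}$ runs $\mathcal{M}$ and then runs $\mathcal{A}$ on its output. The consistent normal form $\mathrm{CNF}(\mathrm{Priv})$ is the smallest set $S$ of algorithms containing $\mathrm{Priv}$ such that whenever $\mathcal{M}\in S$ and $\mathcal{A}$ is any algorithm whose domain contains $\mathrm{range}(\mathcal{M})$ with independent random bits, then $\mathcal{A}\circ\mathcal{M}\in S$; and whenever $\mathcal{M}_1,\mathcal{M}_2\in S$ and $p\in[0,1]$, the algorithm that runs $\mathcal{M}_1$ with probability $p$ and $\mathcal{M}_2$ with probability $1-p$ belongs to $S$. The row cone is $\mathrm{rowcone}(\mathrm{Priv})=\{(c\,P[\mathcal{M}(D_1)=\omega],\,c\,P[\mathcal{M}(D_2)=\omega],\dots) : c\ge 0,\ \mathcal{M}\in\mathrm{CNF}(\mathrm{Priv}),\ \omega\in\mathrm{range}(\mathcal{M})\}$, a set of real vectors indexed by $\mathbb{I}$. *)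

From Stdlib Require Import Reals.
From Coquelicot Require Import Coquelicot.
Open Scope R_scope.

(* An algorithm with input domain I and countable range: its outputs are
   encoded as natural numbers (every countable range embeds in nat).
   It is identified with its output probabilities M D w = P(M(D) = w). *)
Definition alg (I : Type) := I -> nat -> R.

Definition is_distribution (p : nat -> R) : Prop :=
  (forall w, 0 <= p w) /\ is_series p 1.

Definition is_alg {I : Type} (M : alg I) : Prop :=
  forall D, is_distribution (M D).

Definition privacy_definition (I : Type) (Priv : alg I -> Prop) : Prop :=
  forall M, Priv M -> is_alg M.

Definition in_range {I : Type} (M : alg I) (w : nat) : Prop :=
  exists D, 0 < M D w.

(* Consistent normal form: smallest set containing Priv, closed under
   postprocessing (with independent randomness) and convex mixtures. *)
Inductive CNF {I : Type} (Priv : alg I -> Prop) : alg I -> Prop :=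
| CNF_base M : Priv M -> CNF Priv M
| CNF_post (M : alg I) (A : nat -> nat -> R) (M' : alg I) :
    CNF Priv M ->
    (forall w, is_distribution (A w)) ->
    (forall D w', is_series (fun w => M D w * A w w') (M' D w')) ->
    CNF Priv M'
| CNF_mix (M1 M2 : alg I) (p : R) :
    CNF Priv M1 -> CNF Priv M2 -> 0 <= p <= 1 ->
    CNF Priv (fun D w => p * M1 D w + (1 - p) * M2 D w).

Definition rowcone {I : Type} (Priv : alg I -> Prop) (v : I -> R) : Prop :=
  exists (c : R) (M : alg I) (w : nat),
    0 <= c /\ CNF Priv M /\ in_range M w /\ v = (fun D => c * M D w).

Definition convex_cone {I : Type} (S : (I -> R) -> Prop) : Prop :=
  forall (x y : I -> R) (a b : R),
    S x -> S y -> 0 <= a -> 0 <= b -> S (fun D => a * x D + b * y D).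

(* For sums, post-processing
   by the transposition of [w] and 0 moves the row of output [w] to output 0,
   so two rows [c1 * M1 _ w1] and [c2 * M2 _ w2] may be assumed to sit at the
   same output; their sum is [c1 + c2] times the row at 0 of the mixture of
   [M1] and [M2] with weight [c1 / (c1 + c2)].  That output stays in the range
   of the mixture because probabilities of algorithms in CNF are nonnegative. *)

From Stdlib Require Import Reals Lra Lia FunctionalExtensionality.
From Coquelicot Require Import Coquelicot.
Open Scope R_scope.

Lemma is_series_single (g : nat -> R) (n : nat) :
  (forall k, k <> n -> g k = 0) -> is_series g (g n).
Proof.
  intros Hg.
  assert (Hsum : forall N, (n <= N)%nat -> sum_n g N = g n).
  { induction N as [|N IH]; intros HnN.
    - replace n with 0%nat by lia. apply sum_O.
    - rewrite sum_Sn. destruct (Nat.eq_dec n (S N)) as [->|HnSN].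
      + rewrite (sum_n_ext_loc g (fun _ => 0)), sum_n_const by (intros k Hk; apply Hg; lia).
        rewrite Rmult_0_r. apply Rplus_0_l.
      + rewrite IH, (Hg (S N)) by lia. apply Rplus_0_r. }
  change (is_lim_seq (sum_n g) (g n)).
  apply is_lim_seq_ext_loc with (fun _ => g n).
  - exists n. intros N HN. symmetry. now apply Hsum.
  - apply is_lim_seq_const.
Qed.

Lemma is_series_nonneg (a : nat -> R) (l : R) :
  (forall n, 0 <= a n) -> is_series a l -> 0 <= l.
Proof.
  intros Ha Hl.
  rewrite <- (is_series_unique a l Hl).
  rewrite <- (is_series_unique (fun _ => 0) 0) by now apply (is_series_single (fun _ => 0) 0).
  apply Series_le; [intros n; split; [lra | apply Ha] | now exists l].
Qed.

Definition point_mass (k : nat) : nat -> R := fun w => if Nat.eqb w k then 1 else 0.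

Lemma point_mass_distribution (k : nat) : is_distribution (point_mass k).
Proof.
  split.
  - intros w. unfold point_mass. destruct (Nat.eqb w k); lra.
  - replace 1 with (point_mass k k) by (unfold point_mass; now rewrite Nat.eqb_refl).
    apply is_series_single. intros j Hj. unfold point_mass.
    now rewrite (proj2 (Nat.eqb_neq j k) Hj).
Qed.

Section ConsistentNormalForm.

Variables (I : Type) (Priv : alg I -> Prop).

Lemma CNF_nonneg :
  privacy_definition I Priv -> forall M, CNF Priv M -> forall D w, 0 <= M D w.
Proof.
  intros HPriv M HM. induction HM as [M HM | M A M' _ IH HA HM' | M1 M2 p _ IH1 _ IH2 Hp];
    intros D w.
  - apply (HPriv M HM D).
  - apply (is_series_nonneg _ _ (fun v => Rmult_le_pos _ _ (IH D v) (proj1 (HA v) w))).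
    apply HM'.
  - specialize (IH1 D w); specialize (IH2 D w). nra.
Qed.

(* Post-processing by the deterministic map [g] realises relabelling by its
   inverse [f]. *)
Lemma CNF_relabel (M : alg I) (f g : nat -> nat) :
  (forall w, f (g w) = w) -> (forall w, g (f w) = w) ->
  CNF Priv M -> CNF Priv (fun D w => M D (f w)).
Proof.
  intros Hfg Hgf HM.
  apply (CNF_post Priv M (fun w => point_mass (g w))); auto.
  - intros w. apply point_mass_distribution.
  - intros D w'.
    replace (M D (f w')) with (M D (f w') * point_mass (g (f w')) w')
      by (rewrite Hgf; unfold point_mass; rewrite Nat.eqb_refl; ring).
    apply (is_series_single (fun w => M D w * point_mass (g w) w')).
    intros k Hk. unfold point_mass.
    destruct (Nat.eqb_spec w' (g k)) as [->|]; [|ring].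
    now rewrite Hfg in Hk.
Qed.

End ConsistentNormalForm.

Definition transpose0 (a w : nat) : nat :=
  if Nat.eqb w a then 0%nat else if Nat.eqb w 0 then a else w.

Lemma transpose0_involutive (a w : nat) : transpose0 a (transpose0 a w) = w.
Proof.
  unfold transpose0.
  destruct (Nat.eqb_spec w a) as [->|Hwa].
  - rewrite Nat.eqb_refl. destruct a; reflexivity.
  - destruct (Nat.eqb_spec w 0) as [->|Hw0].
    + now rewrite Nat.eqb_refl.
    + now rewrite (proj2 (Nat.eqb_neq w a) Hwa), (proj2 (Nat.eqb_neq w 0) Hw0).
Qed.

Lemma transpose0_0 (a : nat) : transpose0 a 0 = a.
Proof. unfold transpose0. destruct (Nat.eqb_spec 0 a); auto. Qed.

Lemma in_range_mix {I : Type} (M1 M2 : alg I) (p : R) (w : nat) :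
  (forall D, 0 <= M1 D w) -> (forall D, 0 <= M2 D w) -> 0 <= p <= 1 ->
  in_range M1 w -> in_range M2 w ->
  in_range (fun D w => p * M1 D w + (1 - p) * M2 D w) w.
Proof.
  intros N1 N2 Hp [D1 H1] [D2 H2].
  destruct (Rle_lt_or_eq_dec 0 p (proj1 Hp)) as [Hp0 | <-].
  - exists D1. specialize (N2 D1). nra.
  - exists D2. specialize (N1 D2). lra.
Qed.

Section RowCone.

Variables (I : Type) (Priv : alg I -> Prop).
Hypothesis HPriv : privacy_definition I Priv.

Lemma rowcone_scale (x : I -> R) (a : R) :
  rowcone Priv x -> 0 <= a -> rowcone Priv (fun D => a * x D).
Proof.
  intros [c [M [w [Hc [HM [Hw ->]]]]]] Ha.
  exists (a * c), M, w. repeat split; auto.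
  - now apply Rmult_le_pos.
  - apply functional_extensionality; intros D. ring.
Qed.

Lemma rowcone_at_output0 (x : I -> R) :
  rowcone Priv x -> exists c M, 0 <= c /\ CNF Priv M /\ in_range M 0 /\
    x = (fun D => c * M D 0%nat).
Proof.
  intros [c [M [w [Hc [HM [Hw ->]]]]]].
  exists c, (fun D v => M D (transpose0 w v)). repeat split; auto.
  - apply (CNF_relabel I Priv M _ (transpose0 w));
      auto using transpose0_involutive.
  - unfold in_range. now rewrite transpose0_0.
  - now rewrite transpose0_0.
Qed.

Lemma rowcone_add (x y : I -> R) :
  rowcone Priv x -> rowcone Priv y -> rowcone Priv (fun D => x D + y D).
Proof.
  intros Hx Hy.
  destruct (rowcone_at_output0 x Hx) as [c1 [M1 [Hc1 [HM1 [Hw1 ->]]]]].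
  destruct (rowcone_at_output0 y Hy) as [c2 [M2 [Hc2 [HM2 [Hw2 ->]]]]].
  destruct (Rle_lt_or_eq_dec 0 (c1 + c2)) as [Hpos | Hzero]; [lra | |].
  - set (p := c1 / (c1 + c2)).
    assert (Hp : 0 <= p <= 1).
    { unfold p. split.
      - apply Rdiv_le_0_compat; lra.
      - apply Rmult_le_reg_r with (c1 + c2); [exact Hpos |].
        field_simplify; lra. }
    exists (c1 + c2), (fun D w => p * M1 D w + (1 - p) * M2 D w), 0%nat.
    repeat split; [lra | now apply CNF_mix | |].
    + apply in_range_mix; auto; intros D; now apply (CNF_nonneg I Priv HPriv).
    + apply functional_extensionality; intros D.
      unfold p. field. lra.
  - exists 0, M1, 0%nat. repeat split; auto; [lra |].
    apply functional_extensionality; intros D.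
    replace c1 with 0 by lra. replace c2 with 0 by lra. ring.
Qed.

End RowCone.

Theorem theorem2 (I : Type) (Priv : alg I -> Prop) :
  privacy_definition I Priv -> convex_cone (rowcone Priv).
Proof.
  intros HPriv x y a b Hx Hy Ha Hb.
  apply (rowcone_add I Priv HPriv).
  - now apply rowcone_scale.
  - now apply rowcone_scale.
Qed.
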